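(* Let $n \ge 2k + 1 \ge 5$ and let $Q$ be an independent set in $K(n,k)$. If we uniquely expand $$|Q| = \binom{q_{n-k}}{n-k} + \binom{q_{n-k-1}}{n-k-1} + \cdots + \binom{q_j}{j},$$ where $q_{n-k} > q_{n-k-1} > \ldots > q_j \ge j \ge 1$ are natural numbers, then $$|N(Q)| \ge \binom{q_{n-k}}{k} + \binom{q_{n-k-1}}{k-1} + \cdots + \binom{q_j}{j-(n-2k)}.$$
   Context: The Kneser graph $K(n,k)$ has as vertices the $k$-element subsets of $[n]=\{1,\dots,n\}$, two vertices being adjacent iff they are disjoint. For a set $Q$ of vertices of a graph, the neighborhood $N(Q)$ is the set of vertices not in $Q$ that are adjacent to at least one vertex of $Q$. In the bound, the $i$-th term is $\binom{q_i}{i-(n-2k)}$ for $i=n-k,n-k-1,\dots,j$; binomial coefficients with negative lower index are $0$. *)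

From mathcomp Require Import all_boot.
Set Implicit Arguments. Unset Strict Implicit. Unset Printing Implicit Defensive.

Definition kvertex (n k : nat) (A : {set 'I_n}) : bool := #|A| == k.

Definition kadj (n : nat) (A B : {set 'I_n}) : bool := [disjoint A & B].

Definition kvertices (n k : nat) (Q : {set {set 'I_n}}) : Prop :=
  forall A, A \in Q -> kvertex k A.

Definition kindependent (n : nat) (Q : {set {set 'I_n}}) : Prop :=
  forall A B, A \in Q -> B \in Q -> ~~ kadj A B.

Definition kneighborhood (n k : nat) (Q : {set {set 'I_n}}) : {set {set 'I_n}} :=
  [set B : {set 'I_n} | [&& kvertex k B, B \notin Q & [exists A in Q, kadj A B]]].

(* binomial coefficient with possibly negative lower index m - s
   (lower index given as the formal difference m - s of naturals): 0 if m < s *)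
Definition binom_shift (q m s : nat) : nat := if m < s then 0 else 'C(q, m - s).

From mathcomp Require Import all_boot.
From mathcomp Require Import zify.
Set Implicit Arguments. Unset Strict Implicit. Unset Printing Implicit Defensive.

(* The complements of the members of Q form an (n - k)-uniform family of the
   same size, and a k-subset of the complement of A in Q is disjoint from A, hence
   (Q being independent) a vertex of N(Q). So |N(Q)| is at least the size of the
   (n - 2k)-fold shadow of the complements, which the Kruskal-Katona theorem,
   applied once per level, bounds by the shifted cascade. Kruskal-Katona is proved
   by compressing to a shifted family, whose shadow is then controlled by
   induction through the link and the deletion of its least element. *)

Section Shadow.
Variable n : nat.
Implicit Types (A B G H : {set 'I_n}) (E F : {set {set 'I_n}}).

Definition shadow E : {set {set 'I_n}} :=
  [set B : {set 'I_n} | [exists x : 'I_n, (x \notin B) && (x |: B \in E)]].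

Lemma shadowP E B : reflect (exists2 x, x \notin B & x |: B \in E) (B \in shadow E).
Proof.
rewrite inE; apply: (iffP existsP) => [[x /andP[]]|[x xB xBE]]; first by exists x.
by exists x; rewrite xB.
Qed.

Definition uniform t E := [forall A in E, #|A| == t].

Lemma uniformP t E : reflect {in E, forall A, #|A| = t} (uniform t E).
Proof. by apply: (iffP forall_inP) => u A /u /eqP. Qed.

End Shadow.

Section Compression.
Variables (n : nat) (i j : 'I_n).
Hypothesis neq_ij : i != j.
Implicit Types (A B G H : {set 'I_n}) (E F : {set {set 'I_n}}).

Definition shift A := i |: (A :\ j).
Definition unshift A := j |: (A :\ i).
Definition movable A := (j \in A) && (i \notin A).
Definition moved A := (i \in A) && (j \notin A).
Definition compress E A := if movable A && (shift A \notin E) then shift A else A.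
Definition compressF E := compress E @: E.

Lemma shiftK A : movable A -> unshift (shift A) = A.
Proof.
case/andP=> jA iA; apply/setP=> x; rewrite !inE.
case: (eqVneq x j) => [->|_]; first by rewrite jA.
by case: (eqVneq x i) => [->|] //=; rewrite (negbTE iA).
Qed.

Lemma unshiftK A : moved A -> shift (unshift A) = A.
Proof.
case/andP=> iA jA; apply/setP=> x; rewrite !inE.
case: (eqVneq x i) => [->|_]; first by rewrite iA.
by case: (eqVneq x j) => [->|] //=; rewrite (negbTE jA).
Qed.

Lemma moved_shift A : movable A -> moved (shift A).
Proof. by move=> _; rewrite /moved !inE eqxx /= eqxx /= orbF eq_sym. Qed.

Lemma movable_unshift A : moved A -> movable (unshift A).
Proof. by move=> _; rewrite /movable !inE eqxx /= eqxx /= orbF. Qed.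

Lemma card_compress E A : #|compress E A| = #|A|.
Proof.
rewrite /compress; case: ifP => // /andP[/andP[jA iA] _].
by rewrite cardsU1 !inE (negbTE iA) andbF (cardsD1 j A) jA.
Qed.

Lemma compress_inj E : {in E &, injective (compress E)}.
Proof.
move=> A B AE BE; rewrite /compress.
case: ifP => [/andP[mA nA]|_]; case: ifP => [/andP[mB nB]|_] //.
- by move=> eAB; rewrite -(shiftK mA) -(shiftK mB) eAB.
- by move=> eAB; rewrite eAB BE in nA.
- by move=> eAB; rewrite -eAB AE in nB.
Qed.

Lemma card_compressF E : #|compressF E| = #|E|.
Proof. exact/card_in_imset/compress_inj. Qed.

Lemma mem_compressF E B : B \in E -> (movable B -> shift B \in E) -> B \in compressF E.
Proof.
move=> BE sBE; apply/imsetP; exists B => //; rewrite /compress.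
by case: ifP => // /andP[/sBE ->].
Qed.

Lemma mem_compressF_moved E B : moved B -> unshift B \in E -> B \in compressF E.
Proof.
move=> mB uBE; have [BE|BnE] := boolP (B \in E).
  by apply: mem_compressF => // /andP[jB _]; case/andP: mB => _ /negP.
apply/imsetP; exists (unshift B) => //.
by rewrite /compress movable_unshift // unshiftK // BnE.
Qed.

Lemma compressFP E B :
  B \in compressF E -> B \in E \/ (moved B /\ unshift B \in E).
Proof.
case/imsetP=> A AE ->; rewrite /compress; case: ifP => [/andP[mA _]|_]; last by left.
by right; rewrite shiftK // moved_shift.
Qed.

Lemma compressF_movable E B :
  B \in compressF E -> movable B -> B \in E /\ shift B \in E.
Proof.
case/imsetP=> A AE ->; rewrite /compress; case: ifP => [/andP[mA _]|].
  by case/andP=> _; rewrite !inE eqxx.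
by move=> nA mA; rewrite mA /= in nA; move/negbFE: nA.
Qed.

Lemma setU1_shift x A : x != j -> x |: shift A = shift (x |: A).
Proof.
by move=> xj; apply/setP=> y; rewrite !inE; case: (eqVneq y x) => // ->; rewrite xj orbT.
Qed.

Lemma setU1_unshift x A : x != i -> x |: unshift A = unshift (x |: A).
Proof.
by move=> xi; apply/setP=> y; rewrite !inE; case: (eqVneq y x) => // ->; rewrite xi orbT.
Qed.

Lemma shadow_compressF_movable E G :
  movable G -> G \in shadow (compressF E) -> G \in compressF (shadow E).
Proof.
move=> mG /shadowP[x xG HS]; have /andP[jG iG] := mG.
have jH : j \in x |: G by rewrite !inE jG orbT.
apply: mem_compressF => [|_].
  have [_|xi] := eqVneq x i.
    case: (compressFP HS) => [HE|[/andP[_]]]; last by rewrite jH.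
    by apply/shadowP; exists x.
  have mH : movable (x |: G) by rewrite /movable jH !inE negb_or eq_sym xi.
  by case: (compressF_movable HS mH) => HE _; apply/shadowP; exists x.
have [exi|xi] := eqVneq x i.
  case: (compressFP HS) => [HE|[/andP[_]]]; last by rewrite jH.
  apply/shadowP; exists j; first by rewrite !inE eqxx /= orbF eq_sym.
  by rewrite setUCA setD1K // -exi.
have mH : movable (x |: G) by rewrite /movable jH !inE negb_or eq_sym xi.
have xj : x != j by apply: contraNneq xG => ->.
case: (compressF_movable HS mH) => _ sH; apply/shadowP; exists x.
  by rewrite !inE negb_or xi /= (negbTE xG) andbF.
by rewrite setU1_shift.
Qed.

Lemma shadow_compressF_unmovable E G :
  ~~ movable G -> G \in shadow (compressF E) -> G \in compressF (shadow E).
Proof.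
move=> nmG /shadowP[x xG HS].
case: (compressFP HS) => [HE|[/andP[iH jH] uHE]].
  by apply: mem_compressF => [|/negPn]; [apply/shadowP; exists x | rewrite nmG].
have jG : j \notin G by apply: contra jH; rewrite !inE orbC => ->.
have [exi|xi] := eqVneq x i.
  apply: mem_compressF => [|/andP[]]; last by rewrite (negbTE jG).
  apply/shadowP; exists j => //; subst x.
  by rewrite /unshift setU1K in uHE.
have iG : i \in G by move: iH; rewrite !inE eq_sym (negbTE xi).
have xj : x != j by apply: contraNneq jH => <-; rewrite !inE eqxx.
apply: mem_compressF_moved; first by rewrite /moved iG jG.
apply/shadowP; exists x; last by rewrite setU1_unshift.
by rewrite !inE negb_or xj /= negb_and xG orbT.
Qed.

Lemma card_shadow_compressF E : #|shadow (compressF E)| <= #|shadow E|.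
Proof.
rewrite -(card_compressF (shadow E)); apply/subset_leq_card/subsetP => G.
by case: (boolP (movable G)); [apply: shadow_compressF_movable | apply: shadow_compressF_unmovable].
Qed.

End Compression.

Section Shifting.
Variable n : nat.
Implicit Types (A B : {set 'I_n}) (E F G : {set {set 'I_n}}).

Definition shifted_from p E := forall A (x y : 'I_n), A \in E -> x \in A -> y \notin A ->
  p <= y -> y < x -> y |: (A :\ x) \in E.

Definition weight A := \sum_(x in A) (x : nat).
Definition weightF E := \sum_(A in E) weight A.

Lemma weight_shift (i j : 'I_n) A :
  movable i j A -> weight (shift i j A) + j = weight A + i.
Proof.
case/andP=> jA iA; rewrite /weight big_setU1 ?inE ?(negbTE iA) ?andbF //=.
rewrite [in RHS](big_setD1 j jA) /=; move: (\sum_(x in A :\ j) (x : nat)) => s; lia.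
Qed.

Lemma weight_compress (i j : 'I_n) E A : i < j ->
  weight (compress i j E A) + (compress i j E A != A) <= weight A.
Proof.
move=> lt_ij; rewrite /compress; case: ifP => [/andP[mA _]|]; last by rewrite eqxx addn0.
have := weight_shift mA; lia.
Qed.

Lemma weightF_compressF (i j : 'I_n) E :
  i < j -> compressF i j E != E -> weightF (compressF i j E) < weightF E.
Proof.
move=> lt_ij CE; have neq_ij : i != j by rewrite neq_ltn lt_ij.
have [A AE nA] : exists2 A, A \in E & compress i j E A != A.
  apply/exists_inP; apply: contraR CE => /exists_inPn fixE; apply/eqP.
  by rewrite -[RHS]imset_id; apply: eq_in_imset => A /fixE /negPn /eqP.
rewrite /weightF /compressF big_imset /=; last exact: compress_inj.
rewrite (bigD1 A) // [X in _ < X](bigD1 A) //= -addSn.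
apply: leq_add; first by have := weight_compress E A lt_ij; rewrite nA; lia.
by apply: leq_sum => B _; have := weight_compress E B lt_ij; lia.
Qed.

(* Among the families with the same size and no larger shadow, one of minimal
   weight is shifted, since a compression would strictly decrease its weight. *)
Lemma exists_shifted t F : uniform t F -> exists G,
  [/\ uniform t G, #|G| = #|F|, #|shadow G| <= #|shadow F| & shifted_from 0 G].
Proof.
move=> uF.
pose P G := [&& uniform t G, #|G| == #|F| & #|shadow G| <= #|shadow F|].
have PF : P F by rewrite /P uF eqxx leqnn.
case: (arg_minnP weightF PF) => G /and3P[uG /eqP cG sG] minG.
exists G; split => // A x y AG xA yA _ lt_yx; apply/negPn/negP => nG.
have neq_yx : y != x by rewrite neq_ltn lt_yx.
have PC : P (compressF y x G).
  apply/and3P; split; last by apply: leq_trans (card_shadow_compressF neq_yx _) sG.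
    apply/uniformP => _ /imsetP[B BG ->].
    by rewrite card_compress; move/uniformP: uG; apply.
  by rewrite card_compressF cG.
have inC : y |: (A :\ x) \in compressF y x G.
  by apply/imsetP; exists A => //; rewrite /compress /movable xA yA /= nG.
have CG : compressF y x G != G by apply: contraNneq nG => <-.
by have := minG _ PC; rewrite leqNgt weightF_compressF.
Qed.

End Shifting.

Section Cascades.
Implicit Types (a : nat -> nat).

Definition cascade t j a :=
  [/\ 0 < j, j <= t, j <= a j & forall i, j <= i < t -> a i < a i.+1].

Definition kk_bound t M S := forall j a, cascade t j a ->
  \sum_(j <= i < t.+1) 'C(a i, i) <= M -> \sum_(j <= i < t.+1) 'C(a i, i.-1) <= S.

Lemma cascade_ge t j a i : cascade t j a -> j <= i <= t -> i <= a i.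
Proof.
case=> j0 _ ja inc; elim: i => [|i IH] /andP[ji it]; first by lia.
have [<-//|nji] := eqVneq j i.+1.
have := inc i; have := IH; lia.
Qed.

Lemma cascade_restrict t j j' a : cascade t j a -> j <= j' <= t -> cascade t j' a.
Proof.
move=> ca jj'; have [j0 _ _ inc] := ca; split; try lia; first exact: cascade_ge ca jj'.
by move=> i ii; apply: inc; lia.
Qed.

Lemma cascade_offset t j a s : cascade t j a -> s < j ->
  cascade (t - s) (j - s) (fun i => a (i + s)).
Proof.
move=> [j0 jt ja inc] sj; split; try lia.
  by rewrite (subnK (ltnW sj)); exact: leq_trans (leq_subr s j) ja.
by move=> i ii; rewrite addSn; apply: inc; lia.
Qed.

Lemma cascade_pred t j a : cascade t j a -> j < a j -> cascade t j (fun i => (a i).-1).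
Proof.
move=> ca ja; have [j0 jt _ inc] := ca; split => //; first by lia.
by move=> i ii; have := inc i ii; have := cascade_ge ca (_ : j <= i <= t); lia.
Qed.

Lemma cascade_extend t j a : cascade t j a -> 1 < j -> j.-1 < a j ->
  cascade t j.-1 (fun i => if i == j.-1 then j.-1 else a i).
Proof.
move=> [j0 jt _ inc] j1 ja; split; try lia; first by rewrite eqxx.
move=> i ii; have [->|nij] := eqVneq i j.-1; first by rewrite prednK // ifN //; lia.
by rewrite !ifN //; [apply: inc |]; lia.
Qed.

Lemma cascade_sum_gt0 t j a : cascade t j a -> 0 < \sum_(j <= i < t.+1) 'C(a i, i).
Proof. by case=> _ jt ja _; rewrite big_ltn ?ltnS // addn_gt0 bin_gt0 ja. Qed.

Lemma kk_bound0 t S : kk_bound t 0 S.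
Proof.
by move=> j a ca; rewrite leqn0 => /eqP sum0; have := cascade_sum_gt0 ca; rewrite sum0.
Qed.

Lemma kk_bound_le t M M' S S' : kk_bound t M S -> M' <= M -> S <= S' -> kk_bound t M' S'.
Proof.
by move=> kk MM' SS' j a ca sM; apply: leq_trans SS'; apply: kk ca (leq_trans sM MM').
Qed.

Lemma sum_binom_shift (f : nat -> nat) m k s : s <= k ->
  \sum_(m <= i < k) binom_shift (f i) i s = \sum_(maxn m s <= i < k) 'C(f i, i - s).
Proof.
move=> sk; have [km|mk] := leqP k m.
  by rewrite !big_geq // (leq_trans km (leq_maxl m s)).
rewrite (big_cat_nat (leq_maxl m s)) /=; last by rewrite geq_max (ltnW mk).
rewrite big_nat_cond big1 ?add0n => [|i /andP[/andP[mi im] _]]; last first.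
  by rewrite /binom_shift ifT //; lia.
by apply: eq_big_nat => i /andP[mi _]; rewrite /binom_shift ifN //; lia.
Qed.

Lemma sum_extend (F : nat -> nat -> nat) t j a x : 0 < j <= t.+1 ->
  \sum_(j.-1 <= i < t.+1) F (if i == j.-1 then x else a i) i =
  F x j.-1 + \sum_(j <= i < t.+1) F (a i) i.
Proof.
move=> jt; rewrite big_ltn ?eqxx ?prednK //; try lia.
by congr (_ + _); apply: eq_big_nat => i ii; rewrite ifN //; lia.
Qed.

Lemma pascal m k : 0 < m -> 0 < k -> 'C(m, k) = 'C(m.-1, k) + 'C(m.-1, k.-1).
Proof. by case: m => // m _; case: k => // k _; rewrite binS. Qed.

Lemma pascal_shadow m k : 0 < m -> 0 < k ->
  'C(m, k.-1) = 'C(m.-1, k.-1) + binom_shift m.-1 k 2.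
Proof.
move=> m0; case: k => // [[_|k _]]; rewrite /binom_shift /=; first by rewrite !bin0.
by rewrite !subSS subn0 pascal.
Qed.

Lemma kk_bound_pred_gt t M S j a : kk_bound t M S -> cascade t j a -> j < a j ->
  \sum_(j <= i < t.+1) 'C((a i).-1, i) < M ->
  \sum_(j <= i < t.+1) 'C((a i).-1, i.-1) + j.-1 <= S.
Proof.
move=> kk ca ja lt_XM; have [j0 jt _ _] := ca; have ca' := cascade_pred ca ja.
have [ej1|j1] := eqVneq j 1.
  by rewrite ej1 addn0; apply: kk; [rewrite -ej1 | rewrite ej1 in lt_XM; apply: ltnW].
have j1' : 1 < j by lia.
have := kk _ _ (cascade_extend ca' j1' _).
rewrite (sum_extend (fun x i => 'C(x, i))) ?(sum_extend (fun x i => 'C(x, i.-1))); try lia.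
have -> : 'C(j.-1, j.-1.-1) = j.-1 by case: (j) j1' => [|[|j']] // _; rewrite binSn.
rewrite binn => bound; rewrite addnC; apply: bound; [lia | by rewrite add1n].
Qed.

(* The extra [j.-1] makes the induction on [t - j] go through when [a j = j]. *)
Lemma kk_bound_pred t M S j a : kk_bound t M S -> cascade t j a ->
  \sum_(j <= i < t.+1) 'C((a i).-1, i) < M ->
  \sum_(j <= i < t.+1) 'C((a i).-1, i.-1) + j.-1 <= S.
Proof.
move=> kk; have [m] := ubnP (t - j); elim: m j => // m IH j lt_tj ca lt_XM.
have [j0 jt ja _] := ca.
have [ja'|eaj] : j < a j \/ a j = j by lia.
  exact: kk_bound_pred_gt ca ja' lt_XM.
have [ejt|ltjt] : j = t \/ j < t by lia.
  subst j; rewrite !big_nat1 eaj binn.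
  have M0 : 0 < M by move: lt_XM; rewrite big_nat1 eaj bin_small //; lia.
  have Ct : 'C(t, t.-1) = t by case: (t) j0 => // t' _; rewrite binSn.
  have := kk t (fun=> t); rewrite !big_nat1 binn Ct => bound.
  by rewrite add1n prednK //; apply: bound; [split=> // i; lia | lia].
have ca' : cascade t j.+1 a by apply: cascade_restrict ca _; lia.
have lt_XM' : \sum_(j.+1 <= i < t.+1) 'C((a i).-1, i) < M.
  by move: lt_XM; rewrite big_ltn ?ltnS // eaj bin_small ?add0n //; lia.
have lt_tj' : t - j.+1 < m by lia.
have := IH j.+1 lt_tj' ca' lt_XM'; rewrite [in X in _ -> X]big_ltn ?ltnS // eaj binn; lia.
Qed.

Lemma leq_sum_subrange (f : nat -> nat) m m' k : m <= m' ->
  \sum_(m' <= i < k) f i <= \sum_(m <= i < k) f i.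
Proof.
move=> mm'; have [m'k|km'] := leqP m' k; last by rewrite big_geq // ltnW.
by rewrite [leqRHS](big_cat_nat mm' m'k) leq_addl.
Qed.

Lemma sum_offset (f : nat -> nat) m k s : s <= m ->
  \sum_(m - s <= i < k - s) f (i + s) = \sum_(m <= i < k) f i.
Proof. by move=> sm; rewrite -[in RHS](subnK sm) big_addn. Qed.

Lemma kk_link_step t l sL j a : kk_bound t l sL -> cascade t.+1 j a ->
  \sum_(j <= i < t.+2) 'C((a i).-1, i.-1) <= l ->
  \sum_(j <= i < t.+2) binom_shift (a i).-1 i 2 <= sL.
Proof.
move=> kk ca sY; have [j0 jt _ _] := ca; rewrite sum_binom_shift //.
have [t0|t_gt0] := posnP t; first by rewrite big_geq //; lia.
set j2 := maxn j 2.
have ca2 : cascade t.+1 j2 a by apply: cascade_restrict ca _; lia.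
have aj2 : j2 <= a j2 by apply: cascade_ge ca2 _; lia.
have j2_gt1 : 1 < j2 by lia.
have ca1 : cascade t (j2 - 1) (fun i => (a (i + 1)).-1).
  have := cascade_offset ca2 j2_gt1; rewrite subn1 => /cascade_pred; apply.
  by rewrite subnK //; lia.
have reidx (f : nat -> nat) :
    \sum_(j2 - 1 <= i < t.+1) f (i + 1) = \sum_(j2 <= i < t.+2) f i.
  by have := sum_offset f t.+2 (ltnW j2_gt1); rewrite subn1.
have := kk _ _ ca1.
have -> : \sum_(j2 - 1 <= i < t.+1) 'C((a (i + 1)).-1, i.-1) =
          \sum_(j2 <= i < t.+2) 'C((a i).-1, i - 2).
  by rewrite -reidx; apply: eq_bigr => i _; rewrite addn1 subSS subn1.
have -> : \sum_(j2 - 1 <= i < t.+1) 'C((a (i + 1)).-1, i) =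
          \sum_(j2 <= i < t.+2) 'C((a i).-1, i.-1).
  by rewrite -reidx; apply: eq_bigr => i _; rewrite addn1.
apply; exact: leq_trans (leq_sum_subrange _ _ (leq_maxl j 2)) sY.
Qed.

(* The Pascal split [C(a, i) = C(a - 1, i) + C(a - 1, i - 1)] reduces a bound for
   a family to bounds for the link and the deletion of its least element. *)
Lemma kk_bound_split t l d sL sD : kk_bound t l sL -> kk_bound t.+1 d sD -> sD <= l ->
  kk_bound t.+1 (l + d) (l + sL).
Proof.
move=> kkL kkD sDl j a ca sF; have [j0 jt _ _] := ca.
have a_gt0 i : j <= i < t.+2 -> 0 < a i.
  by move=> ii; apply: (@leq_trans i); [lia | apply: cascade_ge ca _; lia].
set X := \sum_(j <= i < t.+2) 'C((a i).-1, i).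
set Y := \sum_(j <= i < t.+2) 'C((a i).-1, i.-1).
have size_split : \sum_(j <= i < t.+2) 'C(a i, i) = X + Y.
  by rewrite -big_split; apply: eq_big_nat => i ii; apply: pascal; [apply: a_gt0 | lia].
have shadow_split : \sum_(j <= i < t.+2) 'C(a i, i.-1) =
    Y + \sum_(j <= i < t.+2) binom_shift (a i).-1 i 2.
  rewrite -big_split; apply: eq_big_nat => i ii.
  by apply: pascal_shadow; [apply: a_gt0 | lia].
have [Yl|lY] := leqP Y l.
  by rewrite shadow_split leq_add // (kk_link_step kkL ca Yl).
have X_lt_d : X < d by move: sF; rewrite size_split; lia.
by have := kk_bound_pred kkD ca X_lt_d; lia.
Qed.

End Cascades.

Section LinkDeletion.
Variable n : nat.
Implicit Types (A B : {set 'I_n}) (F : {set {set 'I_n}}).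

Definition above p F := forall A (x : 'I_n), A \in F -> x \in A -> p <= x.
Definition link (x : 'I_n) F := [set B : {set 'I_n} | (x \notin B) && (x |: B \in F)].
Definition deletion (x : 'I_n) F := [set A in F | x \notin A].

Lemma card_link_deletion x F : #|F| = #|link x F| + #|deletion x F|.
Proof.
rewrite -(cardsID [set A : {set 'I_n} | x \in A] F); congr (_ + _); last first.
  by apply: eq_card => A; rewrite !inE andbC.
have -> : F :&: [set A : {set 'I_n} | x \in A] = [set x |: B | B in link x F].
  apply/setP=> A; rewrite !inE; apply/andP/imsetP => [[AF xA]|[B]].
    by exists (A :\ x); rewrite ?inE ?eqxx /= setD1K.
  by rewrite inE => /andP[_ BF] ->; rewrite setU11.
rewrite card_in_imset // => B C; rewrite !inE => /andP[xB _] /andP[xC _] eBC.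
by rewrite -(setU1K xB) -(setU1K xC) eBC.
Qed.

(* The link and [x] added to its shadow are disjoint parts of the shadow. *)
Lemma card_link_shadow x F : #|link x F| + #|shadow (link x F)| <= #|shadow F|.
Proof.
have xS B : B \in shadow (link x F) -> x \notin B.
  by case/shadowP=> y _; rewrite inE => /andP[+ _]; apply: contra; rewrite !inE orbC => ->.
set S2 := [set x |: B | B in shadow (link x F)].
have <- : #|S2| = #|shadow (link x F)|.
  apply: card_in_imset => B C /xS xB /xS xC eBC.
  by rewrite -(setU1K xB) -(setU1K xC) eBC.
have disj : link x F :&: S2 = set0.
  apply/setP=> A; rewrite !inE; apply/negP=> /andP[/andP[xA _] /imsetP[B _ eA]].
  by rewrite eA setU11 in xA.
rewrite -cardsUI disj cards0 addn0.
apply/subset_leq_card/subsetP=> A; rewrite inE => /orP[|/imsetP[B /shadowP[y yB]]].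
  by rewrite inE => /andP[xA AF]; apply/shadowP; exists x.
rewrite inE => /andP[xyB yBF] ->; apply/shadowP; exists y; last by rewrite setUCA.
by rewrite !inE negb_or yB andbT; apply: contraNneq xyB => ->; rewrite setU11.
Qed.

Section Shifted.
Variables (x : 'I_n) (F : {set {set 'I_n}}).
Hypotheses (abF : above x F) (shF : shifted_from x F).

Lemma above_elt_eq A y : A \in F -> y \in A -> y <= x -> y = x.
Proof. by move=> AF yA yx; apply/val_inj/eqP; rewrite eqn_leq yx (abF AF yA). Qed.

(* A member avoiding [x] shifts its element [y] down to the least element [x]. *)
Lemma shadow_deletion : shadow (deletion x F) \subset link x F.
Proof.
apply/subsetP=> B /shadowP[y yB]; rewrite inE => /andP[yBF xyB].
have xy : x != y by apply: contraNneq xyB => ->; rewrite setU11.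
have xB : x \notin B by apply: contra xyB; rewrite !inE orbC => ->.
have lt_xy : x < y.
  rewrite ltnNge; apply: contra xy => yx.
  by rewrite (above_elt_eq yBF (setU11 y B) yx).
rewrite inE xB /=; have := shF yBF (setU11 y B) xyB (leqnn x) lt_xy.
by rewrite setU1K.
Qed.

Lemma above_link : above x.+1 (link x F).
Proof.
move=> A y; rewrite inE => /andP[xA AF] yA.
have yxA : y \in x |: A by rewrite !inE yA orbT.
rewrite ltn_neqAle (abF AF yxA) andbT.
by apply: contraNneq xA => xy; rewrite (_ : x = y) //; apply: val_inj.
Qed.

Lemma above_deletion : above x.+1 (deletion x F).
Proof.
move=> A y; rewrite inE => /andP[AF xA] yA; rewrite ltn_neqAle (abF AF yA) andbT.
by apply: contraNneq xA => xy; rewrite (_ : x = y) //; apply: val_inj.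
Qed.

Lemma shifted_link : shifted_from x.+1 (link x F).
Proof.
move=> A u v; rewrite inE => /andP[xA AF] uA vA xv vu; rewrite inE.
have neq_xv : x != v by apply: contraTneq xv => <-; rewrite ltnn.
have neq_xu : x != u by apply: contraNneq xA => ->.
rewrite !inE negb_or neq_xv negb_and negbK xA orbT /=.
have uxA : u \in x |: A by rewrite !inE uA orbT.
have vxA : v \notin x |: A by rewrite !inE negb_or (eq_sym v) neq_xv.
have := shF AF uxA vxA (ltnW xv) vu.
suff -> : x |: (v |: (A :\ u)) = v |: ((x |: A) :\ u) by [].
apply/setP=> z; rewrite !inE; case: (eqVneq z x) => [->|] //=.
by rewrite eq_sym neq_xu orbT.
Qed.

Lemma shifted_deletion : shifted_from x.+1 (deletion x F).
Proof.
move=> A u v; rewrite inE => /andP[AF xA] uA vA xv vu.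
have neq_xv : x != v by apply: contraTneq xv => <-; rewrite ltnn.
by rewrite inE (shF AF uA vA (ltnW xv) vu) !inE negb_or neq_xv /= negb_and xA orbT.
Qed.

End Shifted.

Lemma uniform_link t x F : uniform t.+1 F -> uniform t (link x F).
Proof.
move/uniformP=> uF; apply/uniformP => A; rewrite inE => /andP[xA /uF].
by rewrite cardsU1 xA => -[].
Qed.

Lemma uniform_deletion t x F : uniform t F -> uniform t (deletion x F).
Proof. by move/uniformP=> uF; apply/uniformP => A; rewrite inE => /andP[/uF]. Qed.

Lemma above_uniform_eq0 p t F : above p F -> n <= p -> uniform t.+1 F -> F = set0.
Proof.
move=> abF np /uniformP uF; apply/setP=> A; rewrite inE; apply/negP => AF.
have : A = set0.
  by apply/setP=> x; rewrite inE; apply/negP=> /(abF A x AF); have := ltn_ord x; lia.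
by move/(congr1 (fun B => #|B|)); rewrite uF // cards0.
Qed.

(* Induction on the uniformity [t] for the link and on [n - p] for the deletion. *)
Lemma kk_bound_shifted t p F : above p F -> shifted_from p F -> uniform t F ->
  kk_bound t #|F| #|shadow F|.
Proof.
elim: t p F => [p F _ _ _ j a [j0 jt] | t IHt p F]; first by lia.
have [m] := ubnP (n - p); elim: m p F => // m IHm p F lt_np abF shF uF.
have [pn|np] := ltnP p n; last by rewrite (above_uniform_eq0 abF np uF) cards0; apply: kk_bound0.
pose x := Ordinal pn.
have kkL := IHt x.+1 _ (@above_link x _ abF) (@shifted_link x _ shF) (uniform_link x uF).
have lt_nx : n - x.+1 < m by rewrite /=; lia.
have kkD := IHm x.+1 _ lt_nx (@above_deletion x _ abF) (@shifted_deletion x _ shF)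
  (uniform_deletion x uF).
rewrite (card_link_deletion x F); apply: kk_bound_le (kk_bound_split kkL kkD _) _ _ => //.
  exact/subset_leq_card/(@shadow_deletion x).
exact: card_link_shadow.
Qed.

Theorem kruskal_katona t F : uniform t F -> kk_bound t #|F| #|shadow F|.
Proof.
case/exists_shifted=> G [uG <- sG shG]; have abG : above 0 G by [].
exact: kk_bound_le (kk_bound_shifted abG shG uG) (leqnn _) sG.
Qed.

End LinkDeletion.

Section LevelShadow.
Variable n : nat.
Implicit Types (B C : {set 'I_n}) (G : {set {set 'I_n}}).

Definition level_shadow m G :=
  [set B : {set 'I_n} | (#|B| == m) && [exists C in G, B \subset C]].

Lemma uniform_level_shadow m G : uniform m (level_shadow m G).
Proof. by apply/uniformP => B; rewrite inE => /andP[/eqP]. Qed.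

Lemma sub_level_shadow t G : uniform t G -> G \subset level_shadow t G.
Proof.
move/uniformP=> uG; apply/subsetP=> C CG; rewrite inE uG // eqxx /=.
by apply/exists_inP; exists C.
Qed.

Lemma shadow_level_shadow m G : shadow (level_shadow m.+1 G) \subset level_shadow m G.
Proof.
apply/subsetP=> B /shadowP[x xB]; rewrite !inE cardsU1 xB add1n eqSS.
case/andP=> -> /exists_inP[C CG BC]; apply/exists_inP; exists C => //.
exact: subset_trans (subsetUr _ _) BC.
Qed.

Lemma card_level_shadow t j q G s : uniform t G -> cascade t j q ->
  \sum_(j <= i < t.+1) 'C(q i, i) <= #|G| -> s <= t ->
  \sum_(j <= i < t.+1) binom_shift (q i) i s <= #|level_shadow (t - s) G|.
Proof.
move=> uG ca sG; elim: s => [_|s IH st].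
  rewrite subn0; apply: leq_trans (subset_leq_card (sub_level_shadow uG)).
  by apply: leq_trans sG; apply/eq_leq/eq_bigr => i _; rewrite /binom_shift ltn0 subn0.
have [j0 jt _ _] := ca.
set j1 := maxn j s.+1.
have ca1 : cascade (t - s) (j1 - s) (fun i => q (i + s)).
  by apply: cascade_offset; [apply: cascade_restrict ca _|]; lia.
have reidx (f : nat -> nat) :
    \sum_(j1 - s <= i < (t - s).+1) f (i + s) = \sum_(j1 <= i < t.+1) f i.
  by rewrite -subSn ?sum_offset //; lia.
have shadow_sum : \sum_(j1 - s <= i < (t - s).+1) 'C(q (i + s), i.-1) =
                  \sum_(j <= i < t.+1) binom_shift (q i) i s.+1.
  rewrite sum_binom_shift; last by lia.
  rewrite -/j1 -(reidx (fun i => 'C(q i, i - s.+1))).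
  by apply: eq_bigr => i _; rewrite subnS addnK.
have size_sum : \sum_(j1 - s <= i < (t - s).+1) 'C(q (i + s), i) =
                \sum_(j1 <= i < t.+1) 'C(q i, i - s).
  by rewrite -(reidx (fun i => 'C(q i, i - s))); apply: eq_bigr => i _; rewrite addnK.
have := kruskal_katona (uniform_level_shadow (t - s) G) ca1.
rewrite shadow_sum size_sum => /(_ _)/leq_trans; apply.
- apply: leq_trans (IH (ltnW st)); rewrite sum_binom_shift; last by lia.
  by apply: leq_sum_subrange; lia.
- rewrite -subSS subSn //; apply/subset_leq_card/shadow_level_shadow.
Qed.

End LevelShadow.

Lemma level_shadow_compl_sub_neighborhood n k (Q : {set {set 'I_n}}) :
  kindependent Q -> level_shadow k [set ~: A | A in Q] \subset kneighborhood k Q.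
Proof.
move=> indQ; apply/subsetP=> B; rewrite !inE => /andP[cB /exists_inP[_ /imsetP[A AQ ->] BA]].
have adjAB : kadj A B by rewrite /kadj disjoint_sym disjoints_subset.
rewrite /kvertex cB /=; apply/andP; split.
  by apply: contraL adjAB => BQ; apply: indQ.
by apply/exists_inP; exists A.
Qed.

Theorem lemma2p9 (n k : nat) (Q : {set {set 'I_n}}) (j : nat) (q : nat -> nat) :
  5 <= 2 * k + 1 -> 2 * k + 1 <= n ->
  kvertices k Q -> kindependent Q ->
  1 <= j -> j <= q j -> j <= n - k ->
  (forall i, j <= i < n - k -> q i < q i.+1) ->
  #|Q| = \sum_(j <= i < (n - k).+1) 'C(q i, i) ->
  \sum_(j <= i < (n - k).+1) binom_shift (q i) i (n - 2 * k) <= #|kneighborhood k Q|.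
Proof.
move=> _ kn kvQ indQ j0 jq jt inc cardQ. (* the bound also holds for [k < 2] *)
set Qc := [set ~: A | A in Q].
have cardQc : #|Qc| = #|Q| by apply/card_imset/setC_inj.
have uQc : uniform (n - k) Qc.
  apply/uniformP => _ /imsetP[A AQ ->]; have := cardsC A; rewrite card_ord.
  by have /eqP := kvQ A AQ; lia.
have caq : cascade (n - k) j q by split.
have sQc : \sum_(j <= i < (n - k).+1) 'C(q i, i) <= #|Qc| by rewrite cardQc cardQ.
have s_le : n - 2 * k <= n - k by lia.
have := card_level_shadow uQc caq sQc s_le.
rewrite (_ : n - k - (n - 2 * k) = k); last by lia.
move/leq_trans; apply; exact/subset_leq_card/level_shadow_compl_sub_neighborhood.
Qed.
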